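(* Let $D$ be a smooth irreducible complex projective curve with an action of the dihedral group $D_{2l}=\langle i,j\rangle$ (of order $4l$), where $i,j$ are involutions. Let $C=D/\langle j\rangle$ and let $\beta\in\mathrm{Aut}(C)$ be the automorphism induced by $(ij)^l$. Then $\nu(\beta)=\frac12\big(\nu(i)+\nu((ij)^l)\big)$ if $l$ is odd, and $\nu(\beta)=\frac12\big(\nu(j)+\nu((ij)^l)\big)$ if $l$ is even.
   Context: $\nu(\gamma)$ denotes the number of points fixed by an automorphism $\gamma$. The element $(ij)^l$ is central in $D_{2l}$, so it induces an automorphism of $C=D/\langle j\rangle$. *)

From mathcomp Require Import all_boot.
From mathcomp Require Import boolp classical_sets functions cardinality.
Set Implicit Arguments. Unset Strict Implicit. Unset Printing Implicit Defensive.
Local Open Scope classical_set_scope.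
Local Open Scope card_scope.

Definition nu {T : Type} (f : T -> T) (n : nat) : Prop :=
  [set x | f x = x] #= `I_n.

(* Points of the quotient C = D / <j>: the <j>-orbits {x, j x}. *)
Definition quot_pts {D : Type} (j : D -> D) : set (set D) :=
  [set O | exists x, O = [set x] `|` [set j x]].

(* The map induced on D/<j> by a map z commuting with j: O |-> z(O). *)
Definition induced {D : Type} (z : D -> D) : set D -> set D :=
  fun O => z @` O.

Definition nu_quot {D : Type} (j z : D -> D) (n : nat) : Prop :=
  [set O | quot_pts j O /\ induced z O = O] #= `I_n.

(* Write r = i j and z = r^l, which is central and in particular commutes
   with j. A point {x, j x} of D/<j> is fixed by the induced map iff z x = x
   or z x = j x, and over each such point lie exactly two elements of the
   disjoint union Fix(z) + Fix(j z): a free orbit contributes both of its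
   points to the same summand, a j-fixed point x contributes x to both.
   Hence 2 nu(beta) = nu(z) + nu(j z). Finally j z is conjugate to i (l odd)
   or to j (l even) by r^(l/2), so nu(j z) = nu(i) resp. nu(j). *)
From mathcomp Require Import all_boot.
From mathcomp Require Import boolp classical_sets functions cardinality.
From mathcomp Require Import zify.
Set Implicit Arguments. Unset Strict Implicit. Unset Printing Implicit Defensive.
Local Open Scope classical_set_scope.
Local Open Scope card_scope.

Lemma iter_can T (f g : T -> T) n : cancel f g -> cancel (iter n f) (iter n g).
Proof. by move=> fK; elim: n => [|n IH] x //; rewrite iterSr iterS fK IH. Qed.

Lemma iter_morph T U (f : T -> T) (g : U -> U) (h : T -> U) n :
  {morph h : x / f x >-> g x} -> {morph h : x / iter n f x >-> iter n g x}.
Proof. by move=> hf; elim: n => [|n IH] x //=; rewrite hf IH. Qed.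

Lemma iter_can_period T (f g : T -> T) p a b :
  cancel f g -> (forall x, iter p f x = x) -> a + b = p ->
  forall x, iter a g x = iter b f x.
Proof. by move=> fK fp ab x; rewrite -{1}(fp x) -ab iterD (iter_can _ fK). Qed.

Section Dihedral.
Variables (D : Type) (i j : D -> D) (l : nat).
Hypotheses (iK : involutive i) (jK : involutive j).
Hypothesis rl : forall x, iter (2 * l) (i \o j) x = x.

Local Notation r := (i \o j).

Lemma rK : cancel r (j \o i). Proof. by move=> x /=; rewrite iK jK. Qed.
Lemma rVK : cancel (j \o i) r. Proof. by move=> x /=; rewrite jK iK. Qed.

Lemma j_iter_r n x : j (iter n r x) = iter n (j \o i) (j x).
Proof. exact: iter_morph. Qed.

Lemma iter_rV a b x : a + b = 2 * l -> iter a (j \o i) x = iter b r x.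
Proof. by move=> ab; apply: iter_can_period rK rl ab x. Qed.

Lemma j_iter_l_r x : j (iter l r x) = iter l r (j x).
Proof. by rewrite j_iter_r (iter_rV (b := l)) //; lia. Qed.

(* With m = l/2: j r^(l+m) = r^-(l+m) j, and -(l+m) = m + 1 (l odd) or
   m (l even) modulo 2l, while r j = i. *)
Lemma j_iter_l_r_conj x :
  j (iter l r (iter l./2 r x)) = iter l./2 r ((if odd l then i else j) x).
Proof.
rewrite -iterD j_iter_r; have := odd_double_half l.
case: (odd l) => /= hl.
- have -> : i x = r (j x) by rewrite /= jK.
  by rewrite -iterSr (iter_rV (b := l./2.+1)) //; rewrite -!muln2 in hl *; lia.
- by rewrite (iter_rV (b := l./2)) //; rewrite -!muln2 in hl *; lia.
Qed.

End Dihedral.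

Lemma nu_conj T (f g h : T -> T) n :
  bijective h -> (forall x, g (h x) = h (f x)) -> nu f n -> nu g n.
Proof.
move=> [h' hK h'K] gh; rewrite /nu.
suff -> : [set x | g x = x] = h @` [set x | f x = x].
  apply: card_eq_trans; apply: inj_card_eq => x y _ _; apply: (can_inj hK).
apply/seteqP; split => [y gy | _ [x fx <-]]; last by rewrite /= gh fx.
by exists (h' y) => //=; apply: (can_inj hK); rewrite -gh h'K.
Qed.

Definition fixed_pts T (f : T -> T) : set T := [set x | f x = x].

Definition bsum T (A B : set T) : set (bool * T) :=
  [set p | (if p.1 then B else A) p.2].

Lemma bsumxx T (A : set T) p : bsum A A p = A p.2.
Proof. by rewrite /bsum /= if_same. Qed.

Lemma card_bsum T (A B : set T) a b :
  A #= `I_a -> B #= `I_b -> bsum A B #= `I_(a + b).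
Proof.
move=> /card_set_bijP[f [fA fI fS]] /card_set_bijP[g [gB gI gS]].
apply/card_set_bijP; exists (fun p => if p.1 then a + g p.2 else f p.2); split.
- case=> -[] x /= Px; [have := gB x Px | have := fA x Px]; rewrite /=; lia.
- move=> [[] x] [[] y] /set_mem /= Px /set_mem /= Py /= E.
  + by congr pair; apply: gI; rewrite ?inE //; lia.
  + by have := fA y Py; rewrite /=; lia.
  + by have := fA x Px; rewrite /=; lia.
  + by congr pair; apply: fI; rewrite ?inE.
- move=> k /= kab; case: (ltnP k a) => ka.
  + by have [x Ax <-] := fS k ka; exists (false, x).
  + have /gS[y By gy] : `I_b (k - a) by rewrite /=; lia.
    by exists (true, y) => //=; lia.
Qed.

Definition jorbit D (j : D -> D) (x : D) : set D := [set x] `|` [set j x].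

Definition fixed_quot_pts D (j z : D -> D) : set (set D) :=
  [set O | quot_pts j O /\ induced z O = O].

Section Jorbit.
Variables (D : Type) (j : D -> D).
Hypothesis jK : involutive j.

Lemma jorbitJ x : jorbit j (j x) = jorbit j x.
Proof. by rewrite /jorbit jK setUC. Qed.

Lemma jorbit_eq x y : jorbit j x = jorbit j y -> y = x \/ y = j x.
Proof. by move=> E; have : jorbit j x y by rewrite E; left. Qed.

Lemma involution_sign_exists :
  exists s : D -> bool, forall x, j x <> x -> s (j x) = ~~ s x.
Proof.
pose rep (O : set D) : option D :=
  if pselect (exists x, O x) is left h then Some (proj1_sig (cid h)) else None.
have rep_jorbit x : exists2 y, rep (jorbit j x) = Some y & y = x \/ y = j x.
  rewrite /rep; case: pselect => [h|[]]; last by exists x; left.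
  by case: (cid h) => y /= Hy; exists y.
exists (fun x => `[< rep (jorbit j x) = Some x >]) => x jx.
rewrite jorbitJ; have [y -> [->|->]] := rep_jorbit x.
- by rewrite (asboolT (erefl _)) asboolF // => -[/esym].
- by rewrite (asboolT (erefl _)) asboolF // => -[].
Qed.

End Jorbit.

Section QuotientFixedPoints.
Variables (D : Type) (j z : D -> D).
Hypotheses (jK : involutive j) (zj : forall x, j (z x) = z (j x)).

Lemma induced_jorbitP x :
  induced z (jorbit j x) = jorbit j x <-> z x = x \/ z x = j x.
Proof.
split=> [E | ].
- by have : jorbit j x (z x) by rewrite -E; exists x => //; left.
- rewrite /induced /jorbit image_setU !image_set1 -zj.
  by case=> ->; last rewrite jK setUC.
Qed.

Local Notation S := (bsum (fixed_pts z) (fixed_pts (j \o z))).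

Lemma bsum_fixed_jorbit b x : S (b, x) -> z x = x \/ z x = j x.
Proof.
by case: b; rewrite /bsum /fixed_pts /= => fx; [right; rewrite -{2}fx jK | left].
Qed.

Lemma bsum_fixedJ b x : S (b, x) -> S (b, j x).
Proof. by case: b; rewrite /bsum /fixed_pts /= => fx; rewrite -zj fx. Qed.

Lemma bsum_fixed_tag b b' x : j x <> x -> S (b, x) -> S (b', j x) -> b = b'.
Proof.
move=> jx; case: b; case: b'; rewrite /bsum /fixed_pts //= => fx fjx; case: jx.
- by rewrite -zj fx in fjx.
- by rewrite -zj jK fx in fjx.
Qed.

Variable s : D -> bool.
Hypothesis sJ : forall x, j x <> x -> s (j x) = ~~ s x.

(* The two elements of Fix z + Fix (j z) over a fixed point {x, j x} of D/<j>
   are told apart by the summand if j x = x and by the sign s otherwise. *)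
Lemma bsum_fixed_quot_bij :
  set_bij S (bsum (fixed_quot_pts j z) (fixed_quot_pts j z))
    (fun p => (p.1 (+) s p.2, jorbit j p.2)).
Proof.
split.
- move=> [b x] Sx; rewrite bsumxx; split; first by exists x.
  exact/induced_jorbitP/(bsum_fixed_jorbit Sx).
- move=> [b x] [b' y] /set_mem Sx /set_mem Sy [+ /(@jorbit_eq _ j)[] E]; subst y.
  + by move/(canLR (addbK _)); rewrite addbK => ->.
  + have [jx | jx] := pselect (j x = x); first by rewrite jx => /addIb ->.
    rewrite (bsum_fixed_tag jx Sx Sy) sJ // => /addbI /eqP.
    by case: (s x).
- move=> [c O]; rewrite bsumxx /= => -[[x ->]] /induced_jorbitP zx.
  have [jx | jx] := pselect (j x = x).
  + have zx' : z x = x by case: zx => // ->.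
    exists (c (+) s x, x); last by rewrite /= addbK.
    by rewrite /bsum /fixed_pts /=; case: (_ (+) _); rewrite /= zx' ?jx.
  + have [b Sx] : exists b, S (b, x).
      case: zx => zx; first by exists false.
      by exists true; rewrite /bsum /fixed_pts /= zx jK.
    have [cx | cx] := eqVneq (b (+) s x) c.
      by exists (b, x); rewrite //= cx.
    exists (b, j x); first exact: bsum_fixedJ.
    by rewrite /= jorbitJ // sJ // addbN; move: cx; case: (_ (+) _); case: c.
Qed.

End QuotientFixedPoints.

Lemma nu_quot_double D (j z : D -> D) a b :
  involutive j -> (forall x, j (z x) = z (j x)) ->
  nu z a -> nu (j \o z) b -> exists nb, nu_quot j z nb /\ 2 * nb = a + b.
Proof.
move=> jK zj za jzb; have [s sJ] := involution_sign_exists jK.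
pose F := fixed_quot_pts j z.
have FFab : bsum F F #= `I_(a + b).
  apply: card_eq_trans (card_bsum za jzb); rewrite card_eq_sym.
  apply/card_set_bijP; exists (fun p => (p.1 (+) s p.2, jorbit j p.2)).
  exact: bsum_fixed_quot_bij.
have [nb Fnb] : finite_set F.
  suff -> : F = snd @` bsum F F by apply: finite_image; exists (a + b).
  apply/seteqP; split=> [O FO | _ [p Fp <-]]; first by exists (false, O).
  by rewrite bsumxx in Fp.
exists nb; split => //.
have /card_eq_II : `I_(nb + nb) #= `I_(a + b).
  by apply: card_eq_trans FFab; rewrite card_eq_sym; exact: card_bsum.
by lia.
Qed.

Theorem lemma5p4 (D : Type) (l : nat) (i j : D -> D)
  (hl : (0 < l)%N)
  (hi : forall x, i (i x) = x)
  (hj : forall x, j (j x) = x)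
  (hij : forall x, iter (2 * l) (i \o j) x = x)
  (ni nj nz : nat)
  (Hi : nu i ni) (Hj : nu j nj) (Hz : nu (iter l (i \o j)) nz) :
  exists nb : nat, nu_quot j (iter l (i \o j)) nb /\
    (if odd l then (2 * nb = ni + nz)%N else (2 * nb = nj + nz)%N).
Proof.
have zj := j_iter_l_r hi hj hij.
have Hjz : nu (j \o iter l (i \o j)) (if odd l then ni else nj).
  apply: (nu_conj (f := if odd l then i else j) (h := iter l./2 (i \o j))).
  - by exists (iter l./2 (j \o i)); apply: iter_can; [exact: rK | exact: rVK].
  - exact: j_iter_l_r_conj.
  - by case: (odd l).
have [nb [Hnb E]] := nu_quot_double hj zj Hz Hjz.
by exists nb; split => //; case: (odd l) E; lia.
Qed.
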